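(* Let $n\ge 1$ and $0\le \ell\le n$ be integers, let $\lambda=\max\{\ell,n-\ell\}$, and consider the classical encryption scheme defined in the context. Let $X,X'$ be independent, identically distributed random variables on $\{0,1\}^n$ (the plaintext distribution), let $K,K'$ be independent and uniform on $\{0,1\}^\ell$, let $U,U'$ be independent and uniform on $\{0,1\}^\lambda$, and let $V,V'$ be independent and uniform on $\{0,1\}^{n-\ell}$, all these variables being mutually independent. Then $$\Pr\big[\mathsf{Enc}_{UV}(K,X)=\mathsf{Enc}_{U'V'}(K',X')\big]\;\le\;2^{-2n}\Big(1+2^{\,n-\ell-\mathsf H_2(X)}\Big),$$ where $\mathsf H_2(X)=-\log_2\sum_x \Pr[X=x]^2$ is the collision entropy.
   Context: Bit strings are identified with elements of the finite field $\mathrm{GF}(2^\lambda)$ via the polynomial representation (a string of length at most $\lambda$ is viewed as a polynomial of degree $<\lambda$, padded with zeros); addition is bitwise XOR, denoted $\oplus$ or $+$. For a field element $w$, $(w)_{\rm lsb}$ denotes its last (least significant) $n-\ell$ bits, i.e. the polynomial reduced modulo $x^{n-\ell}$. For $u\in\{0,1\}^\lambda$, $v\in\{0,1\}^{n-\ell}$ and key $k\in\{0,1\}^\ell$ define $h_{uv}(k)=k\,\|\,\big((uk)_{\rm lsb}+v\big)\in\{0,1\}^n$, where $\|$ is concatenation and $uk$ is the product in $\mathrm{GF}(2^\lambda)$. The (randomized) encryption of a plaintext $x\in\{0,1\}^n$ is $\mathsf{Enc}_{uv}(k,x)=(u,v,x\oplus h_{uv}(k))$, with $u,v$ drawn uniformly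 at random; decryption is $\mathsf{Dec}(k,(c_1,c_2,c_3))=c_3\oplus h_{c_1c_2}(k)$. Logarithms are base 2. *)

From HB Require Import structures.
From mathcomp Require Import all_boot all_order all_algebra.
From mathcomp Require Import all_classical all_reals all_analysis.
Set Implicit Arguments. Unset Strict Implicit. Unset Printing Implicit Defensive.
Import Order.TTheory GRing.Theory Num.Theory.
Local Open Scope ring_scope.

(* Bit strings of length m are row vectors over 'F_2; XOR is addition. *)
Notation bits m := 'rV['F_2]_m.

Definition poly_of_bits m (w : bits m) : {poly 'F_2} := \sum_(i < m) w 0 i *: 'X^i.

(* Product u*k in GF(2^lam) = F_2[X]/(p), p irreducible of degree lam,
   then (.)_lsb : reduction mod X^(n-l), i.e. the coefficients of degree < n-l. *)
Definition lsb_mul (p : {poly 'F_2}) lam l n (u : bits lam) (k : bits l)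
  : bits (n - l) :=
  \row_(i < n - l) (((poly_of_bits u * poly_of_bits k) %% p)`_i).

Definition hfun (p : {poly 'F_2}) lam l n (hl : (l <= n)%N)
  (u : bits lam) (v : bits (n - l)) (k : bits l) : bits n :=
  castmx (erefl 1%N, subnKC hl) (row_mx k (lsb_mul p n u k + v)).

Definition Enc (p : {poly 'F_2}) lam l n (hl : (l <= n)%N)
  (u : bits lam) (v : bits (n - l)) (k : bits l) (x : bits n)
  : bits lam * bits (n - l) * bits n :=
  (u, v, x + hfun p hl u v k).

Definition unif (R : realType) (T : finType) : R := (#|{: T}|%:R)^-1.

Definition is_distr (R : realType) (T : finType) (P : T -> R) : Prop :=
  (forall t, 0 <= P t) /\ \sum_(t : T) P t = 1.

Definition log2 (R : realType) (x : R) : R := ln x / ln 2.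

Definition H2 (R : realType) (T : finType) (P : T -> R) : R :=
  - log2 (\sum_(t : T) P t ^+ 2).

(* Pr[Enc_{UV}(K,X) = Enc_{U'V'}(K',X')] for X,X' iid ~ P, K,K',U,U',V,V'
   uniform, all mutually independent: the sum over the product space. *)
Definition collision_prob (R : realType) (p : {poly 'F_2}) lam l n
  (hl : (l <= n)%N) (P : bits n -> R) : R :=
  \sum_(x : bits n) \sum_(x' : bits n)
  \sum_(k : bits l) \sum_(k' : bits l)
  \sum_(u : bits lam) \sum_(u' : bits lam)
  \sum_(v : bits (n - l)) \sum_(v' : bits (n - l))
    P x * P x' * unif R (bits l) * unif R (bits l)
    * unif R (bits lam) * unif R (bits lam)
    * unif R (bits (n - l)) * unif R (bits (n - l))
    * (Enc p hl u v k x == Enc p hl u' v' k' x')%:R.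

From HB Require Import structures.
From mathcomp Require Import all_boot all_order all_algebra.
From mathcomp Require Import all_classical all_reals all_analysis.
From mathcomp Require Import ring zify.
Set Implicit Arguments.
Unset Strict Implicit.
Unset Printing Implicit Defensive.
Import Order.TTheory GRing.Theory Num.Theory.
Local Open Scope ring_scope.

(* Fix the plaintexts x and x' and write d for the difference of their first l
   bits.  A collision forces u' = u, v' = v and k' = k + d, and then, on the last
   n - l bits, (u d)_lsb = the difference of the last n - l bits of x and x'.
   If d = 0 this holds for every u when x = x' and for no u otherwise; if d <> 0,
   u |-> u d is a bijection of GF(2^lam), so at most 2^(lam - (n - l)) keys u
   qualify.  Averaging over x, x' turns the indicator of x = x' into the
   collision probability 2^(-H_2(X)). *)

Lemma card_bits m : #|{: bits m}| = (2 ^ m)%N.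
Proof. by rewrite card_mx card_Fp // mul1n. Qed.

Section PolyOfBits.

Variable m : nat.
Implicit Types a b w : bits m.

Lemma poly_of_bitsE w :
  poly_of_bits w = \poly_(i < m) (if insub i is Some j then w 0 j else 0).
Proof. by rewrite poly_def; apply: eq_bigr => j _; rewrite valK. Qed.

Lemma coef_poly_of_bits w (j : 'I_m) : (poly_of_bits w)`_j = w 0 j.
Proof. by rewrite poly_of_bitsE coef_poly ltn_ord valK. Qed.

Lemma size_poly_of_bits w : (size (poly_of_bits w) <= m)%N.
Proof. by rewrite poly_of_bitsE size_poly. Qed.

Lemma poly_of_bitsD a b : poly_of_bits (a + b) = poly_of_bits a + poly_of_bits b.
Proof. by rewrite -big_split; apply: eq_bigr => j _; rewrite mxE scalerDl. Qed.

Lemma poly_of_bitsN a : poly_of_bits (- a) = - poly_of_bits a.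
Proof. by rewrite -sumrN; apply: eq_bigr => j _; rewrite mxE scaleNr. Qed.

Lemma poly_of_bits0 : poly_of_bits (0 : bits m) = 0.
Proof. by rewrite /poly_of_bits big1 // => j _; rewrite mxE scale0r. Qed.

Lemma poly_of_bits_inj : injective (@poly_of_bits m).
Proof.
move=> a b eq_ab; apply/rowP => j.
by rewrite -!coef_poly_of_bits eq_ab.
Qed.

Lemma poly_of_bits_eq0 w : (poly_of_bits w == 0) = (w == 0).
Proof.
apply/eqP/eqP => [w0 | ->]; last exact: poly_of_bits0.
by apply: poly_of_bits_inj; rewrite w0 poly_of_bits0.
Qed.

End PolyOfBits.

Section LsbMul.

Variables (p : {poly 'F_2}) (lam l n : nat) (u : bits lam).

Lemma lsb_mulD (a b : bits l) :
  lsb_mul p n u (a + b) = lsb_mul p n u a + lsb_mul p n u b.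
Proof. by apply/rowP => i; rewrite !mxE poly_of_bitsD mulrDr modpD coefD. Qed.

Lemma lsb_mul0 : lsb_mul p n u (0 : bits l) = 0.
Proof. by apply/rowP => i; rewrite !mxE poly_of_bits0 mulr0 mod0p coef0. Qed.

End LsbMul.

Lemma eq_poly_low_high (R : nzRingType) (q r : {poly R}) (m d : nat) :
  (size q <= d)%N -> (size r <= d)%N ->
  (forall i, (i < m)%N -> q`_i = r`_i) ->
  (forall j, (j < d - m)%N -> q`_(j + m) = r`_(j + m)) -> q = r.
Proof.
move=> szq szr low high; apply/polyP => i.
have [/low // | le_m_i] := ltnP i m.
have [lt_i_d | le_d_i] := ltnP i d; last first.
  by rewrite !nth_default // (leq_trans _ le_d_i).
by rewrite -(subnK le_m_i) high // ltn_sub2r // (leq_ltn_trans le_m_i).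
Qed.

Section ModularProduct.

Variables (p : {poly 'F_2}) (lam : nat).
Hypotheses (hp : irreducible_poly p) (hsize : size p = lam.+1).

Lemma dvdp_poly_of_bits m (w : bits m) :
  (m <= lam)%N -> (p %| poly_of_bits w) = (w == 0).
Proof.
move=> le_m_lam; have [-> | w_neq0] := eqVneq w 0; first by rewrite poly_of_bits0 dvdp0.
by rewrite gtNdvdp ?poly_of_bits_eq0 // hsize ltnS (leq_trans (size_poly_of_bits w)).
Qed.

Lemma mul_poly_of_bits_modp_inj m (d : bits m) : (m <= lam)%N -> d != 0 ->
  injective (fun u : bits lam => (poly_of_bits u * poly_of_bits d) %% p).
Proof.
move=> le_m_lam d_neq0 u1 u2 /= eq_mod.
have coprime_d : coprimep p (poly_of_bits d).
  by rewrite irreducible_poly_coprime // dvdp_poly_of_bits ?d_neq0.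
apply/eqP; rewrite -subr_eq0 -(dvdp_poly_of_bits (u1 - u2)) //.
rewrite -(Gauss_dvdpl _ coprime_d) /dvdp poly_of_bitsD poly_of_bitsN.
by rewrite mulrBl modpD modpN eq_mod subrr.
Qed.

Lemma card_lsb_mul_fiber l n (d : bits l) (w : bits (n - l)) :
  (l <= lam)%N -> (n - l <= lam)%N -> d != 0 ->
  (#|[set u : bits lam | lsb_mul p n u d == w]| <= 2 ^ (lam - (n - l)))%N.
Proof.
move=> le_l_lam le_nl_lam d_neq0.
(* g is injective and on the fiber its low coefficients are fixed, so u is
   determined by the high coefficients of g u. *)
pose g (u : bits lam) := (poly_of_bits u * poly_of_bits d) %% p.
pose high (u : bits lam) : bits (lam - (n - l)) := \row_j (g u)`_(j + (n - l)).
have size_g u : (size (g u) <= lam)%N.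
  by rewrite -ltnS -hsize ltn_modp -size_poly_eq0 hsize.
rewrite -card_bits; apply: (@leq_card_in _ _ high) => u1 u2.
rewrite !inE => /eqP fiber1 /eqP fiber2 eq_high.
apply: (mul_poly_of_bits_modp_inj le_l_lam d_neq0).
apply: (eq_poly_low_high (m := n - l) (size_g u1) (size_g u2)) => [i lt_i | j lt_j].
  have := congr1 (fun r : bits (n - l) => r 0 (Ordinal lt_i)) (etrans fiber1 (esym fiber2)).
  by rewrite !mxE.
have := congr1 (fun r : bits (lam - (n - l)) => r 0 (Ordinal lt_j)) eq_high.
by rewrite !mxE.
Qed.

End ModularProduct.

Lemma addr_eq_shift (V : zmodType) (a a' k k' : V) :
  (a + k == a' + k') = (k' == k + (a - a')).
Proof.
apply/eqP/eqP => [eq_ak | ->]; last by rewrite addrCA subrKC addrC.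
by rewrite addrCA addrA eq_ak addrC addKr.
Qed.

Section SplitBits.

Variables (l n : nat) (hl : (l <= n)%N).

Definition split_bits (x : bits n) : 'rV['F_2]_(l + (n - l)) :=
  castmx (erefl 1%N, esym (subnKC hl)) x.

Definition lbits (x : bits n) : bits l := lsubmx (split_bits x).
Definition rbits (x : bits n) : bits (n - l) := rsubmx (split_bits x).

Lemma split_bits_inj : injective split_bits.
Proof.
apply: (can_inj (g := castmx (erefl 1%N, subnKC hl))) => x.
by rewrite /split_bits castmx_comp castmx_id.
Qed.

Lemma lbits_rbits_inj (x x' : bits n) :
  lbits x = lbits x' -> rbits x = rbits x' -> x = x'.
Proof.
move=> eq_l eq_r; apply: split_bits_inj.
by rewrite -[split_bits x]hsubmxK -[split_bits x']hsubmxK; congr row_mx.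
Qed.

Lemma split_bitsD (x y : bits n) : split_bits (x + y) = split_bits x + split_bits y.
Proof. by apply/matrixP => i j; rewrite !(castmxE, mxE). Qed.

Lemma split_bits_hfun p lam (u : bits lam) v k :
  split_bits (hfun p hl u v k) = row_mx k (lsb_mul p n u k + v).
Proof. by rewrite /split_bits /hfun castmx_comp castmx_id. Qed.

Lemma addr_hfun_eq p lam (u : bits lam) v k k' (x x' : bits n) :
  (x + hfun p hl u v k == x' + hfun p hl u v k') =
  (lbits x + k == lbits x' + k') &&
  (rbits x + lsb_mul p n u k == rbits x' + lsb_mul p n u k').
Proof.
rewrite -(inj_eq split_bits_inj) !split_bitsD !split_bits_hfun.
rewrite -[split_bits x]hsubmxK -[split_bits x']hsubmxK !add_row_mx.
apply/eqP/andP => [/eq_row_mx [-> eq_r] | [/eqP -> /eqP eq_r]].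
  by split=> //; apply/eqP/(addIr v); rewrite -!addrA.
by rewrite !addrA eq_r.
Qed.

Lemma Enc_eqE p lam (u u' : bits lam) v v' k k' (x x' : bits n) :
  (Enc p hl u v k x == Enc p hl u' v' k' x') =
  [&& u' == u, v' == v, k' == k + (lbits x - lbits x')
    & lsb_mul p n u (lbits x - lbits x') == rbits x - rbits x'].
Proof.
rewrite /Enc !xpair_eqE [u == u']eq_sym [v == v']eq_sym.
have [-> | _] //= := eqVneq u' u; have [-> | _] //= := eqVneq v' v.
rewrite addr_hfun_eq [X in X && _]addr_eq_shift.
have [-> | _] //= := eqVneq k' (k + (lbits x - lbits x')).
by rewrite lsb_mulD addr_eq_shift (inj_eq (addrI _)).
Qed.

End SplitBits.

Lemma sum_nat_eq_andb (T : finType) (t0 : T) (b : bool) :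
  (\sum_(t : T) ((t == t0) && b) = b)%N.
Proof. by rewrite (bigD1 t0) //= eqxx big1 ?addn0 // => t /negbTE ->. Qed.

Lemma sum_mem_card (T : finType) (A : {pred T}) : (\sum_(t : T) (t \in A) = #|A|)%N.
Proof.
by rewrite -sum1_card [RHS]big_mkcond; apply: eq_bigr => t _; case: (t \in A).
Qed.

Section Collisions.

Variables (p : {poly 'F_2}) (lam l n : nat) (hl : (l <= n)%N).

Definition collision_set (x x' : bits n) : {set bits lam} :=
  [set u | lsb_mul p n u (lbits hl x - lbits hl x') == rbits hl x - rbits hl x'].

Lemma collision_count (x x' : bits n) :
  (\sum_(k : bits l) \sum_(k' : bits l) \sum_(u : bits lam) \sum_(u' : bits lam)
   \sum_(v : bits (n - l)) \sum_(v' : bits (n - l))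
     (Enc p hl u v k x == Enc p hl u' v' k' x')
   = 2 ^ n * #|collision_set x x'|)%N.
Proof.
(* The equations u' = u, v' = v and k' = k + d each collapse one sum; v is free. *)
under eq_bigr => k _ do under eq_bigr => k' _ do under eq_bigr => u _ do
  under eq_bigr => u' _ do under eq_bigr => v _ do
  under eq_bigr => v' _ do rewrite Enc_eqE andbCA.
under eq_bigr => k _ do under eq_bigr => k' _ do under eq_bigr => u _ do
  under eq_bigr => u' _ do under eq_bigr => v _ do rewrite sum_nat_eq_andb.
under eq_bigr => k _ do under eq_bigr => k' _ do under eq_bigr => u _ do
  under eq_bigr => u' _ do rewrite sum_nat_const.
under eq_bigr => k _ do under eq_bigr => k' _ do under eq_bigr => u _ do
  rewrite -big_distrr sum_nat_eq_andb.
under eq_bigr => k _ do rewrite exchange_big.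
under eq_bigr => k _ do under eq_bigr => u _ do rewrite -big_distrr sum_nat_eq_andb.
under eq_bigr => k _ do rewrite -big_distrr sum_mem_card.
rewrite sum_nat_const /collision_set cardsE !card_bits mulnA -expnD subnKC //.
Qed.

Lemma card_collision_set_le (x x' : bits n) :
  irreducible_poly p -> size p = lam.+1 -> (l <= lam)%N -> (n - l <= lam)%N ->
  (#|collision_set x x'| <= 2 ^ lam * (x == x') + 2 ^ (lam - (n - l)))%N.
Proof.
move=> hp hsize le_l_lam le_nl_lam.
have [eq_l | neq_l] := eqVneq (lbits hl x) (lbits hl x'); last first.
  rewrite (leq_trans (card_lsb_mul_fiber hp hsize _ le_l_lam le_nl_lam _)) ?leq_addl //.
  by rewrite subr_eq0.
have [-> | neq_x] := eqVneq x x'.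
  by rewrite muln1 -card_bits (leq_trans (max_card _)) ?leq_addr.
suff -> : #|collision_set x x'| = 0%N by [].
apply: eq_card0 => u; rewrite !inE eq_l subrr lsb_mul0 eq_sym subr_eq0.
by apply: contraNF neq_x => /eqP /(lbits_rbits_inj eq_l) ->.
Qed.

Lemma collision_probE (R : realType) (P : bits n -> R) :
  collision_prob p lam hl P =
  (2 ^+ (2 * n + 2 * lam))^-1 *
  \sum_(x : bits n) \sum_(x' : bits n) P x * P x' * (2 ^ n * #|collision_set x x'|)%:R.
Proof.
have unif_prod : unif R (bits l) * unif R (bits l) * unif R (bits lam) * unif R (bits lam)
    * unif R (bits (n - l)) * unif R (bits (n - l)) = (2 ^+ (2 * n + 2 * lam))^-1.
  by rewrite /unif !card_bits !natrX -!invfM -!exprD; congr (_ ^+ _)^-1; lia.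
rewrite mulr_sumr; apply: eq_bigr => x _; rewrite mulr_sumr; apply: eq_bigr => x' _.
rewrite -collision_count mulrA.
do 6 (rewrite natr_sum mulr_sumr; apply: eq_bigr => ? _).
by rewrite -unif_prod; ring.
Qed.

End Collisions.

Lemma sum_pair_affine_eq (R : comNzRingType) (T : finType) (P : T -> R) (a b : R) :
  \sum_t P t = 1 ->
  \sum_(x : T) \sum_(y : T) P x * P y * (a * (x == y)%:R + b) = a * \sum_t P t ^+ 2 + b.
Proof.
move=> sumP1.
have collapse x : \sum_(y : T) P y * (x == y)%:R = P x.
  rewrite (bigD1 x) //= eqxx mulr1 big1 ?addr0 // => y.
  by rewrite eq_sym => /negbTE ->; rewrite mulr0.
transitivity (\sum_(x : T) (a * P x ^+ 2 + b * P x)); last first.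
  by rewrite big_split /= -!mulr_sumr sumP1 mulr1.
apply: eq_bigr => x _.
transitivity (\sum_(y : T) (a * P x * (P y * (x == y)%:R) + b * P x * P y)).
  by apply: eq_bigr => y _; ring.
by rewrite big_split /= -!mulr_sumr collapse sumP1; ring.
Qed.

Lemma sum_sqr_distr_gt0 (R : realType) (T : finType) (P : T -> R) :
  is_distr P -> 0 < \sum_t P t ^+ 2.
Proof.
case=> _ sumP1; rewrite lt_def sumr_ge0 ?andbT => [|t _]; last exact: sqr_ge0.
apply/eqP => sum_sqr0.
have P0 t : P t = 0.
  apply/eqP; rewrite -sqrf_eq0; apply/eqP.
  exact: (psumr_eq0P (fun t _ => sqr_ge0 (P t)) sum_sqr0 (i := t) isT).
by move: sumP1; rewrite big1 // => /esym/eqP; rewrite oner_eq0.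
Qed.

Lemma powR2_natr_subH2 (R : realType) (T : finType) (P : T -> R) (m : nat) :
  is_distr P -> 2 `^ (m%:R - H2 P) = 2 ^+ m * \sum_t P t ^+ 2.
Proof.
move=> /sum_sqr_distr_gt0 sum_sqr_gt0.
have two_neq0 : (2 : R) != 0 by rewrite pnatr_eq0.
rewrite /H2 /log2 opprK powRD ?two_neq0 ?implybT // powR_mulrn ?ler0n //.
rewrite /powR (negbTE two_neq0) mulfVK ?lnK //.
by rewrite gt_eqF // ln_gt0 // ltr1n.
Qed.

Lemma ler_invexpr_mul (R : realFieldType) (x : R) (a b c d : nat) :
  1 <= x -> (a + d <= c + b)%N -> (x ^+ b)^-1 * x ^+ a <= (x ^+ d)^-1 * x ^+ c.
Proof.
move=> x_ge1 le_ad_cb; have x_gt0 : 0 < x by rewrite (lt_le_trans ltr01).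
rewrite mulrC [leRHS]mulrC ler_pdivrMr ?exprn_gt0 // mulrAC.
by rewrite ler_pdivlMr ?exprn_gt0 // -!exprD ler_weXn2l // addnC.
Qed.

Theorem theorem1 (R : realType) (n l : nat) (hn : (1 <= n)%N) (hl : (l <= n)%N)
  (p : {poly 'F_2})
  (hp : irreducible_poly p) (hsize : size p = (maxn l (n - l)).+1)
  (P : bits n -> R) (hP : is_distr P) :
  @collision_prob R p (maxn l (n - l)) l n hl P
  <= (2 ^+ (2 * n))^-1 * (1 + 2 `^ ((n - l)%:R - H2 P)).
Proof.
set lam := maxn l (n - l).
have le_l_lam : (l <= lam)%N := leq_maxl _ _.
have le_nl_lam : (n - l <= lam)%N := leq_maxr _ _.
rewrite collision_probE powR2_natr_subH2 //.
have S_ge0 : 0 <= \sum_t P t ^+ 2 := ltW (sum_sqr_distr_gt0 hP).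
have P_ge0 x : 0 <= P x by case: hP.
have count_le x x' : (2 ^ n * #|collision_set p lam hl x x'|)%:R
    <= (2 ^ (n + lam))%:R * (x == x')%:R + (2 ^ (n + (lam - (n - l))))%:R :> R.
  rewrite -natrM -natrD ler_nat !expnD -mulnA -mulnDr leq_mul2l.
  by rewrite card_collision_set_le ?orbT.
apply: (le_trans (ler_wpM2l _ (ler_sum _ (fun x _ => ler_sum _ (fun x' _ =>
  ler_wpM2l (mulr_ge0 (P_ge0 x) (P_ge0 x')) (count_le x x')))))).
  by rewrite invr_ge0 exprn_ge0.
rewrite sum_pair_affine_eq; last by case: hP.
rewrite mulrDr [1 + _]addrC mulrDr mulr1 !natrX !mulrA.
have two_ge1 : 1 <= 2 :> R by rewrite ler1n.
apply: lerD; first by apply: ler_wpM2r => //; apply: ler_invexpr_mul => //; lia.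
by rewrite -[leRHS]mulr1 -(expr0 (2 : R)); apply: ler_invexpr_mul => //; lia.
Qed.
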